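(* (a) For each integer $N\ge0$, the set $\{(a,b)\in P: N(a,b)\le N\}$ is relatively closed in $P$. (b) For every sequence $(a_\nu,b_\nu)$ in $P$ converging to a point of $P'\setminus\{(0,-1)\}$, one has $N(a_\nu,b_\nu)\to\infty$.
   Context: Let $P$ be the set of $(a,b)\in\mathbb{R}^2$ such that $h(x)=x^2+ax+b$ has no multiple root and $h(x)>0$ for all real $x$ with $|x|\ge1$ (equivalently: $a^2<4b$, or $a^2>4b$ and $|a|<\min\{2,b+1\}$). Let $P'=\{(a,b)\in\mathbb{R}^2: a^2=4b\ge4\}\cup\{(a,b)\in\mathbb{R}^2:|a|=b+1\le2\}$. For $(a,b)\in P$ let $C_{a,b}$ be the affine curve $y^2+(x^2-1)(x^2+ax+b)=0$, $\mathbb{R}[C_{a,b}]=\mathbb{R}[x,y]/(y^2+(x^2-1)(x^2+ax+b))$. For $g=u(x)+v(x)y$ put $\delta(g)=\max\{\deg u,\deg v+2\}$, and for $0\ne g$ let $\theta(g)$ be the least integer $e\ge0$ with $g=\sum_i g_i^2$, $g_i\in\mathbb{R}[C_{a,b}]$, $\delta(g_i)\le e$. Define $N(a,b):=\theta(1-x^2)$ computed in $\mathbb{R}[C_{a,b}]$. *)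

From Stdlib Require Import Reals List.
Open Scope R_scope.

(** Real polynomials in one variable x, given by coefficient lists
    [c0; c1; ...; cd] (low degree first). A list of length <= d+1
    represents a polynomial of degree <= d (trailing zeros allowed). *)
Definition peval (p : list R) (x : R) : R :=
  fold_right (fun c acc => c + x * acc) 0 p.

Definition h (a b x : R) : R := x ^ 2 + a * x + b.

Definition inP (a b : R) : Prop :=
  (~ exists r : R, forall x : R, h a b x = (x - r) ^ 2) /\
  (forall x : R, 1 <= Rabs x -> h a b x > 0).

Definition inP' (a b : R) : Prop :=
  (a ^ 2 = 4 * b /\ 4 * b >= 4) \/ (Rabs a = b + 1 /\ b + 1 <= 2).

(** Elements of R[C_{a,b}] = R[x,y]/(y^2 + (x^2-1) h(x)) in normal form
    u(x) + v(x) y, with u, v given as polynomial functions R -> R.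
    (Since R is infinite, equality of polynomials = equality of the
    associated functions, and {1, y} is an R[x]-basis of R[C].) *)
Definition CR := ((R -> R) * (R -> R))%type.

Definition cr_add (f g : CR) : CR :=
  (fun x => fst f x + fst g x, fun x => snd f x + snd g x).

(** Product, using y^2 = -(x^2 - 1) h(x). *)
Definition cr_mul (a b : R) (f g : CR) : CR :=
  (fun x => fst f x * fst g x
            + snd f x * snd g x * (- ((x ^ 2 - 1) * h a b x)),
   fun x => fst f x * snd g x + snd f x * fst g x).

Definition cr_zero : CR := (fun _ => 0, fun _ => 0).

Definition cr_eq (f g : CR) : Prop :=
  forall x : R, fst f x = fst g x /\ snd f x = snd g x.

Definition cr_of (g : list R * list R) : CR :=
  (peval (fst g), peval (snd g)).

(** delta(g) <= e for g = u + v y, where delta(g) = max(deg u, deg v + 2)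
    (deg 0 = -infinity): deg u <= e and deg v <= e - 2. *)
Definition delta_le (g : list R * list R) (e : nat) : Prop :=
  (length (fst g) <= e + 1)%nat /\ (length (snd g) <= e - 1)%nat.

Definition cr_sumsq (a b : R) (gs : list (list R * list R)) : CR :=
  fold_right (fun g acc => cr_add (cr_mul a b (cr_of g) (cr_of g)) acc)
             cr_zero gs.

(** theta(g) <= e in R[C_{a,b}]: g = sum g_i^2 with delta(g_i) <= e.
    (theta(g) is the least such e, so "theta(g) <= e" holds iff such a
    representation exists with bound e; theta(g) = infinity if none.) *)
Definition theta_le (a b : R) (g : CR) (e : nat) : Prop :=
  exists gs : list (list R * list R),
    Forall (fun gi => delta_le gi e) gs /\ cr_eq g (cr_sumsq a b gs).

Definition one_minus_x2 : CR := (fun x => 1 - x ^ 2, fun _ => 0).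

Definition N_le (a b : R) (n : nat) : Prop := theta_le a b one_minus_x2 n.

Definition rel_closed_in (P S : R -> R -> Prop) : Prop :=
  forall a b : R, P a b ->
    (forall eps : R, eps > 0 ->
       exists a' b' : R, P a' b' /\ S a' b' /\
         Rabs (a' - a) < eps /\ Rabs (b' - b) < eps) ->
    S a b.

(* Writing g_i = u_i + v_i y, the identity 1 - x^2 = sum g_i^2 in R[C_{a,b}] says
   exactly that sum u_i^2 = (1 - x^2) (1 - h sum v_i^2) and sum u_i v_i = 0.  At points
   of (-1, 1) where h is bounded below this bounds sum u_i^2 and sum v_i^2; since the
   coefficients of a polynomial of bounded degree are fixed linear combinations of its
   values at finitely many nodes, all coefficients of the u_i, v_i with delta <= e are
   uniformly bounded for (a, b) near a point where h(1) > 0 or h(-1) > 0.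

   (a) For (a, b) in P approximated by points with N <= e, the Gram matrices of the
   coefficient vectors are therefore bounded.  A convergent subsequence has a positive
   semidefinite limit satisfying the same identity at (a, b), and writing it as a sum
   of rank-one matrices gives a representation of 1 - x^2 with delta <= e.

   (b) At a point of P' other than (0, -1), h is positive at one of the endpoints +-1
   but has a root r with |r| >= 1.  Outside [-1, 1] the identity forces
   h sum v_i^2 >= 1, whereas just beyond r the value of h is arbitrarily small and
   sum v_i^2 stays bounded by the coefficient bounds. *)

From Stdlib Require Import Reals Lra Lia Psatz List.
From Stdlib Require Import IndefiniteDescription ClassicalDescription Rtopology.
Open Scope R_scope.

Fixpoint sum_below (n : nat) (f : nat -> R) : R :=
  match n with O => 0 | S m => sum_below m f + f m end.

Definition sum_list {X : Type} (l : list X) (f : X -> R) : R :=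
  fold_right (fun x acc => f x + acc) 0 l.

Lemma sum_below_ext n f g :
  (forall j, (j < n)%nat -> f j = g j) -> sum_below n f = sum_below n g.
Proof.
  induction n as [|n IH]; intros H; simpl; [reflexivity|].
  rewrite IH by (intros; apply H; lia). rewrite H by lia. reflexivity.
Qed.

Lemma sum_below_add n f g :
  sum_below n (fun j => f j + g j) = sum_below n f + sum_below n g.
Proof. induction n; simpl; [lra|]. rewrite IHn; lra. Qed.

Lemma sum_below_sub n f g :
  sum_below n (fun j => f j - g j) = sum_below n f - sum_below n g.
Proof. induction n; simpl; [lra|]. rewrite IHn; lra. Qed.

Lemma sum_below_scal_l n c f : sum_below n (fun j => c * f j) = c * sum_below n f.
Proof. induction n; simpl; [lra|]. rewrite IHn; lra. Qed.

Lemma sum_below_scal_r n c f : sum_below n (fun j => f j * c) = sum_below n f * c.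
Proof. induction n; simpl; [lra|]. rewrite IHn; lra. Qed.

Lemma sum_below_const n c : sum_below n (fun _ => c) = INR n * c.
Proof. induction n; simpl sum_below; [simpl; ring|]. rewrite IHn, S_INR. ring. Qed.

Lemma sum_below_zero n : sum_below n (fun _ => 0) = 0.
Proof. rewrite sum_below_const. ring. Qed.

Lemma sum_below_le n f g :
  (forall j, (j < n)%nat -> f j <= g j) -> sum_below n f <= sum_below n g.
Proof.
  induction n as [|n IH]; intros H; simpl; [lra|].
  pose proof (H n ltac:(lia)). pose proof (IH ltac:(intros; apply H; lia)). lra.
Qed.

Lemma sum_below_nonneg n f : (forall j, (j < n)%nat -> 0 <= f j) -> 0 <= sum_below n f.
Proof. intros H. rewrite <- (sum_below_zero n). apply sum_below_le. exact H. Qed.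

Lemma sum_below_term_le n f j :
  (forall i, (i < n)%nat -> 0 <= f i) -> (j < n)%nat -> f j <= sum_below n f.
Proof.
  induction n as [|n IH]; simpl; intros H Hj; [lia|].
  assert (0 <= sum_below n f) by (apply sum_below_nonneg; intros; apply H; lia).
  destruct (Nat.eq_dec j n) as [->|Hne]; [lra|].
  pose proof (H n ltac:(lia)). pose proof (IH ltac:(intros; apply H; lia) ltac:(lia)). lra.
Qed.

Lemma sum_below_succ_l n f : sum_below (S n) f = f O + sum_below n (fun i => f (S i)).
Proof. induction n; simpl in *; [lra|]. rewrite IHn. lra. Qed.

Lemma sum_below_mul n m f g :
  sum_below n f * sum_below m g = sum_below n (fun p => sum_below m (fun q => f p * g q)).
Proof. induction n; simpl; [lra|]. rewrite <- IHn, sum_below_scal_l. lra. Qed.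

Lemma sum_below_delta m (F : nat -> R) p : (p < m)%nat ->
  sum_below m (fun q => F q * (if Nat.eqb q p then 1 else 0)) = F p.
Proof.
  induction m as [|m IH]; intros Hp; [lia|]. simpl.
  destruct (Nat.eq_dec p m) as [->|Hne].
  - rewrite Nat.eqb_refl, (sum_below_ext m _ (fun _ => 0)), sum_below_zero; [ring|].
    intros j Hj. destruct (Nat.eqb_spec j m); [lia|ring].
  - rewrite IH by lia. destruct (Nat.eqb_spec m p); [lia|ring].
Qed.

(* Cauchy-Schwarz against the constant vector 1 *)
Lemma sum_below_sq_le n f : (sum_below n f) ^ 2 <= INR n * sum_below n (fun j => f j ^ 2).
Proof.
  induction n as [|n IH]; [simpl; lra|].
  change (sum_below (S n) f) with (sum_below n f + f n).
  change (sum_below (S n) (fun j => f j ^ 2)) with (sum_below n (fun j => f j ^ 2) + f n ^ 2).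
  rewrite S_INR.
  set (s := sum_below n f) in *. set (q := sum_below n (fun j => f j ^ 2)) in *.
  set (N := INR n) in *. set (y := f n).
  assert (HN : 0 <= N) by apply pos_INR.
  assert (Hq : 0 <= q) by (apply sum_below_nonneg; intros; apply pow2_ge_0).
  destruct (Req_dec N 0) as [HN0|HN0].
  - rewrite HN0 in IH |- *. assert (s = 0) by nra. subst s. nra.
  - assert (0 <= (s - N * y) ^ 2) by apply pow2_ge_0.
    assert ((N + 1) * s ^ 2 <= (N + 1) * (N * q)) by (apply Rmult_le_compat_l; lra).
    apply Rmult_le_reg_l with N; nra.
Qed.

Lemma sum_list_add {X} (l : list X) f g :
  sum_list l (fun x => f x + g x) = sum_list l f + sum_list l g.
Proof. induction l; simpl; [lra|]. rewrite IHl; lra. Qed.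

Lemma sum_list_scal_l {X} (l : list X) c f : sum_list l (fun x => c * f x) = c * sum_list l f.
Proof. induction l; simpl; [lra|]. rewrite IHl; lra. Qed.

Lemma sum_list_ext {X} (l : list X) f g :
  (forall x, In x l -> f x = g x) -> sum_list l f = sum_list l g.
Proof. induction l; simpl; intros H; [lra|]. rewrite H, IHl by auto. reflexivity. Qed.

Lemma sum_list_zero {X} (l : list X) : sum_list l (fun _ => 0) = 0.
Proof. induction l; simpl; lra. Qed.

Lemma sum_list_le {X} (l : list X) f g :
  (forall x, In x l -> f x <= g x) -> sum_list l f <= sum_list l g.
Proof.
  induction l; simpl; intros H; [lra|].
  pose proof (H a (or_introl eq_refl)). pose proof (IHl (fun x Hx => H x (or_intror Hx))). lra.
Qed.

Lemma sum_list_nonneg {X} (l : list X) f : (forall x, In x l -> 0 <= f x) -> 0 <= sum_list l f.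
Proof. intros H. rewrite <- (sum_list_zero l). apply sum_list_le. exact H. Qed.

Lemma sum_list_sum_below {X} (l : list X) n F :
  sum_list l (fun x => sum_below n (F x)) = sum_below n (fun j => sum_list l (fun x => F x j)).
Proof.
  induction l; simpl; [rewrite sum_below_zero; reflexivity|].
  rewrite IHl, <- sum_below_add. reflexivity.
Qed.

Lemma sum_list_map {X Y} (f : X -> Y) l F : sum_list (map f l) F = sum_list l (fun x => F (f x)).
Proof. induction l; simpl; [reflexivity|]. rewrite IHl. reflexivity. Qed.

Lemma peval_sum_below p n x :
  (length p <= n)%nat -> peval p x = sum_below n (fun i => nth i p 0 * x ^ i).
Proof.
  revert n; induction p as [|c p IH]; intros n Hn; simpl.
  - transitivity (sum_below n (fun _ => 0)); [symmetry; apply sum_below_zero|].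
    apply sum_below_ext. intros [|j] _; simpl; ring.
  - destruct n as [|m]; simpl in Hn; [lia|].
    rewrite sum_below_succ_l, (IH m) by lia. rewrite <- sum_below_scal_l. simpl.
    f_equal; [ring|]. apply sum_below_ext. intros; ring.
Qed.

(* Quotient of [p] by [X - x0] (synthetic division). *)
Fixpoint pdiv_lin (x0 : R) (p : list R) : list R :=
  match p with
  | nil => nil
  | c :: p' => match p' with nil => nil | _ => peval p' x0 :: pdiv_lin x0 p' end
  end.

Lemma pdiv_lin_eval x0 p x : peval p x = peval p x0 + (x - x0) * peval (pdiv_lin x0 p) x.
Proof.
  induction p as [|c [|c' p'] IH]; [simpl; ring|simpl; ring|].
  change (peval (c :: c' :: p') x) with (c + x * peval (c' :: p') x).
  change (pdiv_lin x0 (c :: c' :: p')) with (peval (c' :: p') x0 :: pdiv_lin x0 (c' :: p')).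
  rewrite IH. simpl. ring.
Qed.

Lemma pdiv_lin_length x0 p : length (pdiv_lin x0 p) = pred (length p).
Proof. induction p as [|c [|c' p'] IH]; simpl in *; auto. Qed.

Lemma pdiv_lin_coef x0 p i :
  nth i p 0 = (match i with O => peval p x0 | S i' => nth i' (pdiv_lin x0 p) 0 end)
              - x0 * nth i (pdiv_lin x0 p) 0.
Proof.
  revert i; induction p as [|c [|c' p'] IH]; intros i.
  - destruct i as [|[|i]]; simpl; ring.
  - destruct i as [|[|[|i]]]; simpl; ring.
  - destruct i as [|i]; [simpl; ring|].
    change (nth (S i) (c :: c' :: p') 0) with (nth i (c' :: p') 0).
    rewrite (IH i). destruct i; simpl; ring.
Qed.

Lemma coef_interpolation n (X : nat -> R) :
  (forall j k, (j < k)%nat -> X j <> X k) ->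
  exists W : nat -> nat -> R, forall i p, (length p <= n)%nat ->
    nth i p 0 = sum_below n (fun j => W i j * peval p (X j)).
Proof.
  intros Hinj. induction n as [|m [W' HW']].
  - exists (fun _ _ => 0). intros i [|c p] Hp; simpl in Hp; [|lia]. destruct i; reflexivity.
  - set (x0 := X m).
    set (Wq := fun i j => W' i j / (X j - x0)).
    set (sq := fun i => sum_below m (Wq i)).
    set (prev := fun i j => match i with O => 0 | S i' => Wq i' j end).
    set (prevs := fun i => match i with O => -1 | S i' => sq i' end).
    exists (fun i j => if Nat.ltb j m then prev i j - x0 * Wq i j else - prevs i + x0 * sq i).
    intros i p Hp.
    set (q := pdiv_lin x0 p).
    assert (Hq : (length q <= m)%nat) by (unfold q; rewrite pdiv_lin_length; lia).
    assert (Hqv : forall i, nth i q 0 =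
              sum_below m (fun j => Wq i j * peval p (X j)) - sq i * peval p x0).
    { intros i0. rewrite (HW' i0 q Hq). unfold sq.
      rewrite <- sum_below_scal_r, <- sum_below_sub. apply sum_below_ext. intros j Hj.
      assert (Hne : X j - x0 <> 0) by (pose proof (Hinj j m Hj); unfold x0; lra).
      pose proof (pdiv_lin_eval x0 p (X j)) as E. fold q in E.
      unfold Wq. replace (peval q (X j)) with ((peval p (X j) - peval p x0) / (X j - x0))
        by (rewrite E; field; exact Hne).
      field. exact Hne. }
    rewrite (pdiv_lin_coef x0 p i). fold q. simpl sum_below.
    rewrite (sum_below_ext m _ (fun j => prev i j * peval p (X j) - x0 * (Wq i j * peval p (X j)))).
    2:{ intros j Hj. apply Nat.ltb_lt in Hj. rewrite Hj. ring. }
    rewrite Nat.ltb_irrefl, sum_below_sub, sum_below_scal_l, Hqv.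
    assert (Hpr : (match i with O => peval p x0 | S i' => nth i' q 0 end)
                  = sum_below m (fun j => prev i j * peval p (X j)) - prevs i * peval p x0).
    { destruct i as [|i']; simpl; [|apply Hqv].
      rewrite (sum_below_ext m _ (fun _ => 0)), sum_below_zero by (intros; ring). ring. }
    rewrite Hpr. unfold x0. ring.
Qed.

Lemma coef_sq_le_node_values n (X : nat -> R) (W : nat -> nat -> R) p i :
  (forall i p, (length p <= n)%nat -> nth i p 0 = sum_below n (fun j => W i j * peval p (X j))) ->
  (length p <= n)%nat -> (i < n)%nat ->
  (nth i p 0) ^ 2 <= INR n * sum_below n (fun i => sum_below n (fun j => W i j ^ 2))
                     * sum_below n (fun j => (peval p (X j)) ^ 2).
Proof.
  intros HW Hp Hi. rewrite (HW i p Hp).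
  eapply Rle_trans; [apply sum_below_sq_le|].
  rewrite Rmult_assoc. apply Rmult_le_compat_l; [apply pos_INR|].
  rewrite <- sum_below_scal_l. apply sum_below_le. intros j Hj.
  rewrite Rpow_mult_distr. apply Rmult_le_compat_r; [apply pow2_ge_0|].
  eapply Rle_trans; [|apply (sum_below_term_le n _ i)]; auto.
  - apply (sum_below_term_le n (fun j => W i j ^ 2) j); auto. intros; apply pow2_ge_0.
  - intros; apply sum_below_nonneg; intros; apply pow2_ge_0.
Qed.

Definition sos_rep (a b : R) (n : nat) (gs : list (list R * list R)) : Prop :=
  Forall (fun g => delta_le g n) gs /\ cr_eq one_minus_x2 (cr_sumsq a b gs).

Definition sum_u2 (gs : list (list R * list R)) x := sum_list gs (fun g => (peval (fst g) x) ^ 2).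
Definition sum_v2 (gs : list (list R * list R)) x := sum_list gs (fun g => (peval (snd g) x) ^ 2).
Definition sum_uv (gs : list (list R * list R)) x :=
  sum_list gs (fun g => peval (fst g) x * peval (snd g) x).

Lemma sum_u2_nonneg gs x : 0 <= sum_u2 gs x.
Proof. apply sum_list_nonneg. intros; apply pow2_ge_0. Qed.

Lemma sum_v2_nonneg gs x : 0 <= sum_v2 gs x.
Proof. apply sum_list_nonneg. intros; apply pow2_ge_0. Qed.

Lemma cr_sumsq_fst a b gs x :
  fst (cr_sumsq a b gs) x = sum_u2 gs x + sum_v2 gs x * (- ((x ^ 2 - 1) * h a b x)).
Proof.
  unfold sum_u2, sum_v2. induction gs as [|g gs IH]; simpl; [ring|].
  rewrite IH. unfold cr_of. simpl. ring.
Qed.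

Lemma cr_sumsq_snd a b gs x : snd (cr_sumsq a b gs) x = 2 * sum_uv gs x.
Proof.
  unfold sum_uv. induction gs as [|g gs IH]; simpl; [ring|].
  rewrite IH. unfold cr_of. simpl. ring.
Qed.

Lemma sumsq_one_minus_x2_iff a b gs :
  cr_eq one_minus_x2 (cr_sumsq a b gs) <->
  forall x, sum_u2 gs x = (1 - x ^ 2) * (1 - h a b x * sum_v2 gs x) /\ sum_uv gs x = 0.
Proof.
  unfold cr_eq. split; intros H x; destruct (H x) as [H1 H2];
    rewrite ?cr_sumsq_fst, ?cr_sumsq_snd in *; simpl in *; split; lra.
Qed.

Lemma sos_rep_inside_bounds a b n gs x c : sos_rep a b n gs ->
  x ^ 2 < 1 -> 0 < c -> c <= h a b x -> sum_u2 gs x <= 1 /\ sum_v2 gs x <= / c.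
Proof.
  intros [_ Hr] Hx Hc Hh. destruct (proj1 (sumsq_one_minus_x2_iff a b gs) Hr x) as [HU _].
  pose proof (sum_u2_nonneg gs x). pose proof (sum_v2_nonneg gs x).
  pose proof (pow2_ge_0 x).
  assert (HhV : h a b x * sum_v2 gs x <= 1) by nra.
  split; [nra|].
  apply (Rmult_le_reg_l c); [lra|]. rewrite Rinv_r by lra. nra.
Qed.

Lemma sos_rep_outside_bound a b n gs x : sos_rep a b n gs ->
  1 < x ^ 2 -> 1 <= h a b x * sum_v2 gs x.
Proof.
  intros [_ Hr] Hx. destruct (proj1 (sumsq_one_minus_x2_iff a b gs) Hr x) as [HU _].
  pose proof (sum_u2_nonneg gs x). nra.
Qed.

Definition coef_sq_sum (f : list R * list R -> list R) (i : nat) (gs : list (list R * list R)) :=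
  sum_list gs (fun g => (nth i (f g) 0) ^ 2).

Lemma coef_sq_sum_bounded_at_nodes e (X : nat -> R) c :
  (forall j k, (j < k)%nat -> X j <> X k) -> 0 < c ->
  exists B, forall a b gs,
    (forall j, (j < S e)%nat -> X j ^ 2 < 1 /\ c <= h a b (X j)) ->
    sos_rep a b e gs ->
    forall i, (i < S e)%nat -> coef_sq_sum fst i gs <= B /\ coef_sq_sum snd i gs <= B.
Proof.
  intros Hinj Hc. destruct (coef_interpolation (S e) X Hinj) as [W HW].
  set (N := INR (S e)). set (Wb := sum_below (S e) (fun i => sum_below (S e) (fun j => W i j ^ 2))).
  assert (HNW : 0 <= N * Wb).
  { apply Rmult_le_pos; [apply pos_INR|].
    apply sum_below_nonneg; intros; apply sum_below_nonneg; intros; apply pow2_ge_0. }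
  exists (N * Wb * (N * (1 + / c))).
  intros a b gs Hnodes Hrep i Hi.
  assert (Hic : 0 < / c) by (apply Rinv_0_lt_compat; exact Hc).
  assert (Hf : forall f : list R * list R -> list R,
             (forall g, In g gs -> (length (f g) <= S e)%nat) ->
             (forall j, (j < S e)%nat -> sum_list gs (fun g => (peval (f g) (X j)) ^ 2) <= 1 + / c) ->
             coef_sq_sum f i gs <= N * Wb * (N * (1 + / c))).
  { intros f Hlen Hval. unfold coef_sq_sum.
    eapply Rle_trans.
    { apply (sum_list_le gs _ (fun g => N * Wb * sum_below (S e) (fun j => (peval (f g) (X j)) ^ 2))).
      intros g Hg. apply coef_sq_le_node_values; auto. }
    rewrite sum_list_scal_l, sum_list_sum_below. apply Rmult_le_compat_l; [exact HNW|].
    unfold N. rewrite <- sum_below_const. apply sum_below_le. exact Hval. }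
  assert (Hdeg := proj1 Hrep). rewrite Forall_forall in Hdeg.
  split; apply Hf.
  - intros g Hg. destruct (Hdeg g Hg). lia.
  - intros j Hj. destruct (Hnodes j Hj) as [Hx Hh].
    destruct (sos_rep_inside_bounds a b e gs (X j) c Hrep Hx Hc Hh). unfold sum_u2 in *. lra.
  - intros g Hg. destruct (Hdeg g Hg). lia.
  - intros j Hj. destruct (Hnodes j Hj) as [Hx Hh].
    destruct (sos_rep_inside_bounds a b e gs (X j) c Hrep Hx Hc Hh). unfold sum_v2 in *. lra.
Qed.

Lemma h_continuity a b x : continuity_pt (h a b) x.
Proof. unfold h. reg. Qed.

Lemma h_dist_le a a' b b' x :
  Rabs (h a' b' x - h a b x) <= Rabs (a' - a) * Rabs x + Rabs (b' - b).
Proof.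
  replace (h a' b' x - h a b x) with ((a' - a) * x + (b' - b)) by (unfold h; ring).
  rewrite <- Rabs_mult. apply Rabs_triang.
Qed.

Lemma nodes_near_endpoint a b s : s * s = 1 -> 0 < h a b s ->
  exists X : nat -> R, (forall j k, (j < k)%nat -> X j <> X k) /\
    forall j, X j ^ 2 < 1 /\ h a b s / 2 <= h a b (X j).
Proof.
  intros Hs Hh.
  destruct (h_continuity a b s (h a b s / 2) ltac:(lra)) as [delta [Hdelta Hcont]].
  set (t := fun j : nat => Rmin 1 delta / (INR j + 2)).
  assert (Ht : forall j, 0 < t j < 1 /\ t j < delta).
  { intros j. pose proof (pos_INR j). pose proof (Rmin_l 1 delta). pose proof (Rmin_r 1 delta).
    assert (0 < Rmin 1 delta) by (apply Rmin_pos; lra).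
    unfold t. split; [split|]; [apply Rdiv_lt_0_compat; lra| |];
      apply (Rmult_lt_reg_r (INR j + 2)); try lra; field_simplify; nra. }
  assert (Habs : Rabs s = 1)
    by (destruct (Rle_dec 0 s); [rewrite Rabs_right | rewrite Rabs_left]; nra).
  exists (fun j => s * (1 - t j)). split.
  - intros j k Hjk E.
    assert (Htjk : t j = t k).
    { assert (s * (s * (1 - t j)) = s * (s * (1 - t k))) by (rewrite E; reflexivity).
      rewrite <- !Rmult_assoc, Hs in H. lra. }
    assert (HM : 0 < Rmin 1 delta) by (apply Rmin_pos; lra).
    unfold t, Rdiv in Htjk. apply Rmult_eq_reg_l, Rinv_eq_reg in Htjk; [|lra].
    apply lt_INR in Hjk. lra.
  - intros j. destruct (Ht j) as [[Ht0 Ht1] Htd]. split; [nra|].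
    assert (Hne : s <> s * (1 - t j)) by (intro E; nra).
    assert (Hd : Rdist (h a b (s * (1 - t j))) (h a b s) < h a b s / 2).
    { apply Hcont. split; [split; [exact I|exact Hne]|].
      simpl. unfold Rdist. replace (s * (1 - t j) - s) with (- (s * t j)) by ring.
      rewrite Rabs_Ropp, Rabs_mult, Habs, Rabs_right by lra. lra. }
    unfold Rdist in Hd. apply Rabs_def2 in Hd. lra.
Qed.

Lemma coef_sq_sum_bounded_near a0 b0 s e : s * s = 1 -> 0 < h a0 b0 s ->
  exists B eta, 0 < eta /\ forall a b gs,
    Rabs (a - a0) < eta -> Rabs (b - b0) < eta -> sos_rep a b e gs ->
    forall i, (i < S e)%nat -> coef_sq_sum fst i gs <= B /\ coef_sq_sum snd i gs <= B.
Proof.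
  intros Hs Hh.
  destruct (nodes_near_endpoint a0 b0 s Hs Hh) as [X [Hinj HX]].
  set (c := h a0 b0 s / 4).
  destruct (coef_sq_sum_bounded_at_nodes e X c Hinj ltac:(unfold c; lra)) as [B HB].
  exists B, (c / 2). split; [unfold c; lra|].
  intros a b gs Ha Hb Hrep. apply (HB a b gs); [|exact Hrep].
  intros j _. destruct (HX j) as [Hx Hhx]. split; [exact Hx|].
  assert (Hxj : Rabs (X j) <= 1) by (apply Rabs_le; nra).
  pose proof (h_dist_le a0 a b0 b (X j)) as Hd.
  pose proof (Rabs_pos (a - a0)).
  assert (Rabs (a - a0) * Rabs (X j) <= Rabs (a - a0)) by nra.
  pose proof (Rle_abs (- (h a b (X j) - h a0 b0 (X j)))). rewrite Rabs_Ropp in *.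
  unfold c in *. lra.
Qed.

Lemma cv_const c : Un_cv (fun _ => c) c.
Proof. intros eps He. exists O. intros. unfold Rdist. rewrite Rminus_diag, Rabs_R0. lra. Qed.

Lemma cv_ext (u v : nat -> R) l : (forall k, u k = v k) -> Un_cv u l -> Un_cv v l.
Proof. intros E H eps He. destruct (H eps He) as [N HN]. exists N. intros k Hk. rewrite <- E. auto. Qed.

Lemma cv_nonneg u l : Un_cv u l -> (forall k, 0 <= u k) -> 0 <= l.
Proof.
  intros Hu Hp. destruct (Rle_dec 0 l) as [|Hn]; auto.
  destruct (Hu (- l / 2)) as [N HN]; [lra|].
  specialize (HN N (Nat.le_refl N)). unfold Rdist in HN. specialize (Hp N).
  pose proof (Rle_abs (u N - l)). lra.
Qed.

Lemma sum_below_cv n (F : nat -> nat -> R) l :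
  (forall j, (j < n)%nat -> Un_cv (fun k => F k j) (l j)) ->
  Un_cv (fun k => sum_below n (F k)) (sum_below n l).
Proof.
  induction n as [|n IH]; intros H; simpl; [apply cv_const|].
  apply CV_plus; [apply IH; intros; apply H; lia|apply H; lia].
Qed.

Lemma h_cv (A B : nat -> R) a b x :
  Un_cv A a -> Un_cv B b -> Un_cv (fun k => h (A k) (B k) x) (h a b x).
Proof.
  intros HA HB. unfold h.
  apply CV_plus; [apply CV_plus; [apply cv_const|apply CV_mult; [exact HA|apply cv_const]]|exact HB].
Qed.

Lemma pow_sq_le x i n : (i <= n)%nat -> (x ^ i) ^ 2 <= (1 + x ^ 2) ^ n.
Proof.
  intros Hi. rewrite <- pow_mult, Nat.mul_comm, pow_mult.
  pose proof (pow2_ge_0 x).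
  apply Rle_trans with ((1 + x ^ 2) ^ i); [apply pow_incr; lra|apply Rle_pow; [lra|exact Hi]].
Qed.

Lemma sum_v2_le e gs x B : Forall (fun g => delta_le g e) gs ->
  (forall i, (i < S e)%nat -> coef_sq_sum snd i gs <= B) ->
  sum_v2 gs x <= INR (S e) * (1 + x ^ 2) ^ e * (INR (S e) * B).
Proof.
  intros Hdeg HB. rewrite Forall_forall in Hdeg. unfold sum_v2.
  assert (HT : 0 <= INR (S e) * (1 + x ^ 2) ^ e)
    by (apply Rmult_le_pos; [apply pos_INR|apply pow_le; pose proof (pow2_ge_0 x); lra]).
  eapply Rle_trans.
  { apply (sum_list_le gs _ (fun g => INR (S e) * (1 + x ^ 2) ^ e *
                                      sum_below (S e) (fun i => (nth i (snd g) 0) ^ 2))).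
    intros g Hg. destruct (Hdeg g Hg) as [_ Hlen].
    rewrite (peval_sum_below (snd g) (S e)) by lia.
    eapply Rle_trans; [apply sum_below_sq_le|].
    rewrite Rmult_assoc. apply Rmult_le_compat_l; [apply pos_INR|].
    rewrite <- sum_below_scal_l. apply sum_below_le. intros i Hi.
    rewrite Rpow_mult_distr, Rmult_comm.
    apply Rmult_le_compat_r; [apply pow2_ge_0|apply pow_sq_le; lia]. }
  rewrite sum_list_scal_l, sum_list_sum_below. apply Rmult_le_compat_l; [exact HT|].
  rewrite <- sum_below_const. apply sum_below_le. exact HB.
Qed.

Lemma h_small_near_outer_root a b r : h a b r = 0 -> 1 <= r * r ->
  forall eps, 0 < eps -> exists x, 1 < x ^ 2 <= 4 * r ^ 2 /\ h a b x < eps.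
Proof.
  intros Hhr Hr eps Heps.
  destruct (h_continuity a b r eps Heps) as [delta [Hdelta Hcont]].
  assert (Habs : 1 <= Rabs r)
    by (destruct (Rle_dec 0 r); [rewrite Rabs_right | rewrite Rabs_left]; nra).
  set (t := Rmin 1 (delta / (2 * Rabs r))).
  assert (Ht : 0 < t <= 1 /\ Rabs r * t < delta).
  { pose proof (Rmin_l 1 (delta / (2 * Rabs r))). pose proof (Rmin_r 1 (delta / (2 * Rabs r))).
    assert (0 < t) by (apply Rmin_pos; [lra|apply Rdiv_lt_0_compat; lra]).
    split; [unfold t in *; lra|].
    apply Rle_lt_trans with (Rabs r * (delta / (2 * Rabs r)));
      [apply Rmult_le_compat_l; unfold t in *; lra|].
    replace (Rabs r * (delta / (2 * Rabs r))) with (delta / 2) by (field; lra). lra. }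
  destruct Ht as [[Ht0 Ht1] Htd]. clearbody t.
  exists (r * (1 + t)).
  replace ((r * (1 + t)) ^ 2) with (r * r * ((1 + t) * (1 + t))) by ring.
  split; [clear - Hr Ht0 Ht1; split; [nra|assert ((1 + t) * (1 + t) <= 4) by nra; nra]|].
  assert (Hne : r <> r * (1 + t)) by (clear - Hr Ht0; intro E; nra).
  assert (Hd : Rdist (h a b (r * (1 + t))) (h a b r) < eps).
  { apply Hcont. split; [split; [exact I|exact Hne]|].
    simpl. unfold Rdist. replace (r * (1 + t) - r) with (r * t) by ring.
    rewrite Rabs_mult, (Rabs_right t) by lra. lra. }
  unfold Rdist in Hd. rewrite Hhr, Rminus_0_r in Hd. pose proof (Rle_abs (h a b (r * (1 + t)))). lra.
Qed.

Lemma inP'_outer_root a0 b0 : inP' a0 b0 -> ~ (a0 = 0 /\ b0 = -1) ->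
  exists r s, 1 <= r * r /\ h a0 b0 r = 0 /\ s * s = 1 /\ 0 < h a0 b0 s.
Proof.
  unfold inP', h. intros [[H1 H2]|[H1 H2]] Hn.
  - exists (- a0 / 2). destruct (Rlt_dec a0 0); [exists (-1)|exists 1]; repeat split; nra.
  - destruct (Rtotal_order a0 0) as [Hlt|[Heq|Hgt]].
    + rewrite Rabs_left in H1 by lra. exists 1, (-1). repeat split; nra.
    + subst. rewrite Rabs_R0 in H1. exfalso. apply Hn. split; lra.
    + rewrite Rabs_right in H1 by lra. exists (-1), 1. repeat split; nra.
Qed.

Lemma N_unbounded_near_outer_root (sa sb : nat -> R) a0 b0 r s :
  Un_cv sa a0 -> Un_cv sb b0 ->
  1 <= r * r -> h a0 b0 r = 0 -> s * s = 1 -> 0 < h a0 b0 s ->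
  forall M : nat, exists K : nat, forall k : nat, (K <= k)%nat -> ~ N_le (sa k) (sb k) M.
Proof.
  intros Ha Hb Hr Hhr Hs Hhs M.
  destruct (coef_sq_sum_bounded_near a0 b0 s M Hs Hhs) as [B [eta [Heta HB]]].
  set (C := INR (S M) * (1 + 4 * r ^ 2) ^ M * (INR (S M) * Rabs B) + 1).
  assert (HC : 1 <= C).
  { assert (0 <= (1 + 4 * r ^ 2) ^ M) by (apply pow_le; nra).
    pose proof (pos_INR (S M)). pose proof (Rabs_pos B).
    unfold C. assert (0 <= INR (S M) * (1 + 4 * r ^ 2) ^ M * (INR (S M) * Rabs B)); [|lra].
    repeat apply Rmult_le_pos; lra. }
  destruct (h_small_near_outer_root a0 b0 r Hhr Hr (/ (2 * C))) as [x [[Hx1 Hx2] Hhx]].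
  { apply Rinv_0_lt_compat. lra. }
  assert (HCi : / (2 * C) < / C) by (apply Rinv_lt_contravar; nra).
  destruct (Ha eta Heta) as [K1 HK1]. destruct (Hb eta Heta) as [K2 HK2].
  destruct (h_cv sa sb a0 b0 x Ha Hb (/ C - h a0 b0 x)) as [K3 HK3]; [lra|].
  exists (max K1 (max K2 K3)). intros k Hk [gs Hrep].
  assert (HBk := HB (sa k) (sb k) gs (HK1 k ltac:(lia)) (HK2 k ltac:(lia)) Hrep).
  assert (HV : sum_v2 gs x <= C - 1).
  { eapply Rle_trans.
    - apply (sum_v2_le M gs x (Rabs B) (proj1 Hrep)).
      intros i Hi. eapply Rle_trans; [apply (HBk i Hi)|apply Rle_abs].
    - apply Rle_trans with (INR (S M) * (1 + 4 * r ^ 2) ^ M * (INR (S M) * Rabs B));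
        [|unfold C; lra].
      apply Rmult_le_compat_r; [apply Rmult_le_pos; [apply pos_INR|apply Rabs_pos]|].
      apply Rmult_le_compat_l; [apply pos_INR|].
      apply pow_incr. pose proof (pow2_ge_0 x). lra. }
  assert (Hhk : h (sa k) (sb k) x < / C).
  { specialize (HK3 k ltac:(lia)). unfold Rdist in HK3. apply Rabs_def2 in HK3. lra. }
  pose proof (sos_rep_outside_bound _ _ _ gs x Hrep Hx1).
  pose proof (sum_v2_nonneg gs x).
  assert (/ C * C = 1) by (field; lra).
  assert (0 < / C) by (apply Rinv_0_lt_compat; lra).
  nra.
Qed.

Definition bform (n1 n2 o1 o2 : nat) (G : nat -> nat -> R) (u v : nat -> R) : R :=
  sum_below n1 (fun p => sum_below n2 (fun q => G (o1 + p)%nat (o2 + q)%nat * u p * v q)).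

Definition qform (d : nat) (G : nat -> nat -> R) (t : nat -> R) : R := bform d d 0 0 G t t.

Definition psd (d : nat) (G : nat -> nat -> R) : Prop := forall t, 0 <= qform d G t.

Definition sym_below (d : nat) (G : nat -> nat -> R) : Prop :=
  forall p q, (p < d)%nat -> (q < d)%nat -> G p q = G q p.

Lemma bform_ext n1 n2 o1 o2 o1' o2' G G' u v :
  (forall p q, (p < n1)%nat -> (q < n2)%nat ->
     G (o1 + p)%nat (o2 + q)%nat = G' (o1' + p)%nat (o2' + q)%nat) ->
  bform n1 n2 o1 o2 G u v = bform n1 n2 o1' o2' G' u v.
Proof.
  intros H. apply sum_below_ext. intros p Hp. apply sum_below_ext. intros q Hq. rewrite H; auto.
Qed.

Lemma bform_cv n1 n2 o1 o2 (Gs : nat -> nat -> nat -> R) G u v :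
  (forall p q, (p < n1)%nat -> (q < n2)%nat ->
     Un_cv (fun k => Gs k (o1 + p)%nat (o2 + q)%nat) (G (o1 + p)%nat (o2 + q)%nat)) ->
  Un_cv (fun k => bform n1 n2 o1 o2 (Gs k) u v) (bform n1 n2 o1 o2 G u v).
Proof.
  intros H. apply sum_below_cv. intros p Hp.
  apply (sum_below_cv n2 (fun k q => Gs k (o1 + p)%nat (o2 + q)%nat * u p * v q)).
  intros q Hq. apply CV_mult; [apply CV_mult; [apply H; auto|apply cv_const]|apply cv_const].
Qed.

Definition set_at (t : nat -> R) (m : nat) (beta : R) : nat -> R :=
  fun j => if Nat.eqb j m then beta else t j.

Lemma qform_set_at m G t beta : (forall p, (p < m)%nat -> G p m = G m p) ->
  qform (S m) G (set_at t m beta)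
  = qform m G t + 2 * beta * sum_below m (fun q => G m q * t q) + G m m * beta ^ 2.
Proof.
  intros Hs. unfold qform, bform, set_at. simpl sum_below. rewrite Nat.eqb_refl, sum_below_add.
  rewrite (sum_below_ext m (fun p => sum_below m _) (fun p => sum_below m (fun q => G p q * t p * t q))).
  2:{ intros p Hp. apply sum_below_ext. intros q Hq.
      destruct (Nat.eqb_spec p m), (Nat.eqb_spec q m); [lia..|reflexivity]. }
  rewrite (sum_below_ext m (fun p => G p m * _ * beta) (fun q => beta * (G m q * t q))).
  2:{ intros p Hp. destruct (Nat.eqb_spec p m); [lia|]. rewrite Hs by auto. ring. }
  rewrite (sum_below_ext m (fun q => G m q * beta * _) (fun q => beta * (G m q * t q))).
  2:{ intros q Hq. destruct (Nat.eqb_spec q m); [lia|]. ring. }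
  rewrite !sum_below_scal_l. ring.
Qed.

Section SchurComplement.
Variables (m : nat) (G : nat -> nat -> R).
Hypotheses (Hsym : sym_below (S m) G) (Hpsd : psd (S m) G).

Let Hcol : forall p, (p < m)%nat -> G p m = G m p.
Proof. intros p Hp. apply Hsym; lia. Qed.

Let Hext : forall t beta,
  0 <= qform m G t + 2 * beta * sum_below m (fun q => G m q * t q) + G m m * beta ^ 2.
Proof. intros t beta. rewrite <- qform_set_at by exact Hcol. apply Hpsd. Qed.

Lemma psd_restrict : psd m G.
Proof. intros t. pose proof (Hext t 0). lra. Qed.

Lemma psd_diag_nonneg : 0 <= G m m.
Proof.
  pose proof (Hext (fun _ => 0) 1) as H.
  assert (Hq : qform m G (fun _ => 0) = 0).
  { unfold qform, bform. transitivity (sum_below m (fun _ => 0)); [|apply sum_below_zero].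
    apply sum_below_ext. intros p _.
    transitivity (sum_below m (fun _ => 0)); [apply sum_below_ext; intros; ring|apply sum_below_zero]. }
  assert (Hs : sum_below m (fun q => G m q * 0) = 0).
  { transitivity (sum_below m (fun _ => 0)); [apply sum_below_ext; intros; ring|apply sum_below_zero]. }
  rewrite Hq, Hs in H. lra.
Qed.

Lemma psd_zero_diag_row : G m m = 0 -> forall q, (q < m)%nat -> G m q = 0.
Proof.
  intros Hg q Hq.
  set (t := fun j => if Nat.eqb j q then 1 else 0).
  assert (Hs : sum_below m (fun j => G m j * t j) = G m q) by (apply sum_below_delta; exact Hq).
  destruct (Req_dec (G m q) 0) as [|Hne]; [assumption|exfalso].
  pose proof (Hext t (- (qform m G t + 1) / (2 * G m q))) as H.
  rewrite Hs, Hg in H.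
  replace (qform m G t + 2 * (- (qform m G t + 1) / (2 * G m q)) * G m q
           + 0 * (- (qform m G t + 1) / (2 * G m q)) ^ 2) with (-1) in H by (field; exact Hne).
  lra.
Qed.

(* With x / 0 = 0 the complement is G itself when G m m = 0, and then the last row vanishes. *)
Lemma schur_complement_psd : psd m (fun p q => G p q - G p m * G m q / G m m).
Proof.
  destruct (Req_dec (G m m) 0) as [E|E].
  - intros t. replace (qform m _ t) with (qform m G t); [apply psd_restrict|].
    apply bform_ext. intros p q _ Hq. simpl.
    rewrite (psd_zero_diag_row E q Hq). unfold Rdiv. ring.
  - assert (Hg : 0 < G m m) by (pose proof psd_diag_nonneg; lra).
    intros t. set (s := sum_below m (fun q => G m q * t q)).
    pose proof (Hext t (- s / G m m)) as H. fold s in H.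
    replace (qform m (fun p q => G p q - G p m * G m q / G m m) t) with (qform m G t - s ^ 2 / G m m).
    + replace (qform m G t + 2 * (- s / G m m) * s + G m m * (- s / G m m) ^ 2)
        with (qform m G t - s ^ 2 / G m m) in H by (field; lra). exact H.
    + symmetry. unfold qform, bform. simpl.
      rewrite (sum_below_ext m _ (fun p => sum_below m (fun q => G p q * t p * t q)
                                        - (G m p * t p) * s / G m m)).
      2:{ intros p Hp. unfold s, Rdiv.
          rewrite <- sum_below_scal_l, <- !sum_below_scal_r, <- sum_below_sub.
          apply sum_below_ext. intros q _. rewrite Hcol by auto. ring. }
      rewrite sum_below_sub. unfold Rdiv. rewrite !sum_below_scal_r. fold s. ring.
Qed.

Lemma psd_last_row_div q : (q < S m)%nat -> G m q = G m m * G m q / G m m.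
Proof.
  intros Hq. destruct (Req_dec (G m m) 0) as [E|E]; [|field; exact E].
  destruct (Nat.eq_dec q m) as [->|Hne]; [rewrite E; unfold Rdiv; ring|].
  rewrite (psd_zero_diag_row E q ltac:(lia)). unfold Rdiv. ring.
Qed.

End SchurComplement.

Definition extend_zero (m : nat) (w : nat -> R) : nat -> R := fun j => if Nat.ltb j m then w j else 0.

Lemma psd_gram_decomposition d : forall G : nat -> nat -> R,
  sym_below d G -> psd d G ->
  exists ws : list (nat -> R), forall p q, (p < d)%nat -> (q < d)%nat ->
    G p q = sum_list ws (fun w => w p * w q).
Proof.
  induction d as [|m IH]; intros G Hsym Hpsd; [exists nil; intros; lia|].
  set (g := G m m).
  set (G' := fun p q => G p q - G p m * G m q / g).
  set (w0 := fun j => G j m / sqrt g).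
  assert (Hg : 0 <= g) by exact (psd_diag_nonneg m G Hsym Hpsd).
  assert (Hw0 : forall p q, (p < S m)%nat -> (q < S m)%nat -> w0 p * w0 q = G p m * G m q / g).
  { intros p q Hp Hq. unfold w0. rewrite (Hsym q m) by lia.
    destruct (Req_dec g 0) as [E|E].
    - rewrite E, sqrt_0. unfold Rdiv. rewrite Rinv_0. ring.
    - pose proof (sqrt_lt_R0 g ltac:(lra)).
      replace (G p m / sqrt g * (G m q / sqrt g)) with (G p m * G m q / (sqrt g * sqrt g))
        by (field; lra).
      rewrite sqrt_sqrt by exact Hg. reflexivity. }
  assert (Hrow := psd_last_row_div m G Hsym Hpsd). fold g in Hrow.
  destruct (IH G') as [ws' Hws'].
  { intros p q Hp Hq. unfold G'. rewrite (Hsym p q), (Hsym p m), (Hsym q m) by lia. unfold Rdiv. ring. }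
  { exact (schur_complement_psd m G Hsym Hpsd). }
  exists (w0 :: map (extend_zero m) ws'). intros p q Hp Hq.
  simpl sum_list. rewrite sum_list_map. unfold extend_zero.
  destruct (Nat.ltb_spec p m) as [Hpm|Hpm]; destruct (Nat.ltb_spec q m) as [Hqm|Hqm].
  - rewrite <- Hws' by auto. rewrite Hw0 by lia. unfold G'. ring.
  - rewrite (sum_list_ext _ _ (fun _ => 0)), sum_list_zero by (intros; ring).
    replace q with m by lia. rewrite Hw0, (Hsym p m) by lia.
    transitivity (g * G m p / g); [apply Hrow; lia|unfold g, Rdiv; ring].
  - rewrite (sum_list_ext _ _ (fun _ => 0)), sum_list_zero by (intros; ring).
    replace p with m by lia. rewrite Hw0 by lia.
    transitivity (g * G m q / g); [apply Hrow; lia|unfold g, Rdiv; ring].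
  - rewrite (sum_list_ext _ _ (fun _ => 0)), sum_list_zero by (intros; ring).
    replace p with m by lia. replace q with m by lia. rewrite Hw0 by lia.
    transitivity (g * G m m / g); [apply Hrow; lia|unfold g, Rdiv; ring].
Qed.

(* Coordinates of u + v y with delta <= e: the e+1 coefficients of u followed by the
   e-1 coefficients of v. *)
Definition gram_dim (e : nat) : nat := (S e + (e - 1))%nat.

Definition coef_vec (e : nat) (g : list R * list R) (p : nat) : R :=
  if Nat.ltb p (S e) then nth p (fst g) 0 else nth (p - S e) (snd g) 0.

Definition of_coef_vec (e : nat) (w : nat -> R) : list R * list R :=
  (map w (seq 0 (S e)), map (fun q => w (S e + q)%nat) (seq 0 (e - 1))).

Definition gram (e : nat) (gs : list (list R * list R)) (p q : nat) : R :=
  sum_list gs (fun g => coef_vec e g p * coef_vec e g q).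

Definition gram_u2 e G x := bform (S e) (S e) 0 0 G (pow x) (pow x).
Definition gram_v2 e G x := bform (e - 1) (e - 1) (S e) (S e) G (pow x) (pow x).
Definition gram_uv e G x := bform (S e) (e - 1) 0 (S e) G (pow x) (pow x).

Definition gram_identity (e : nat) (a b : R) (G : nat -> nat -> R) : Prop :=
  forall x, gram_u2 e G x = (1 - x ^ 2) * (1 - h a b x * gram_v2 e G x) /\ gram_uv e G x = 0.

Lemma coef_vec_fst e g p : (p < S e)%nat -> coef_vec e g p = nth p (fst g) 0.
Proof. intros Hp. unfold coef_vec. apply Nat.ltb_lt in Hp. rewrite Hp. reflexivity. Qed.

Lemma coef_vec_snd e g q : coef_vec e g (S e + q) = nth q (snd g) 0.
Proof.
  unfold coef_vec. destruct (Nat.ltb_spec (S e + q) (S e)); [lia|]. f_equal. lia.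
Qed.

Lemma nth_map_seq (w : nat -> R) n p : (p < n)%nat -> nth p (map w (seq 0 n)) 0 = w p.
Proof.
  intros Hp. rewrite (nth_indep _ 0 (w 0%nat)) by (rewrite length_map, length_seq; auto).
  rewrite map_nth, seq_nth by auto. reflexivity.
Qed.

Lemma coef_vec_of_coef_vec e w p : (p < gram_dim e)%nat -> coef_vec e (of_coef_vec e w) p = w p.
Proof.
  unfold gram_dim. intros Hp. destruct (Nat.ltb_spec p (S e)).
  - rewrite coef_vec_fst by exact H. apply nth_map_seq. exact H.
  - replace p with (S e + (p - S e))%nat by lia. rewrite coef_vec_snd.
    apply (nth_map_seq (fun q => w (S e + q)%nat)). lia.
Qed.

Lemma delta_le_of_coef_vec e w : delta_le (of_coef_vec e w) e.
Proof. unfold delta_le, of_coef_vec; cbn [fst snd]. rewrite !length_map, !length_seq. lia. Qed.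

Lemma sum_list_peval_mul {X} (gs : list X) (A B : X -> list R) n m x :
  (forall g, In g gs -> (length (A g) <= n)%nat /\ (length (B g) <= m)%nat) ->
  sum_list gs (fun g => peval (A g) x * peval (B g) x) =
  bform n m 0 0 (fun p q => sum_list gs (fun g => nth p (A g) 0 * nth q (B g) 0)) (pow x) (pow x).
Proof.
  intros H.
  rewrite (sum_list_ext gs _ (fun g => sum_below n (fun p => sum_below m (fun q =>
             x ^ p * x ^ q * (nth p (A g) 0 * nth q (B g) 0))))).
  2:{ intros g Hg. destruct (H g Hg).
      rewrite (peval_sum_below (A g) n), (peval_sum_below (B g) m), sum_below_mul by auto.
      apply sum_below_ext; intros; apply sum_below_ext; intros. ring. }
  rewrite sum_list_sum_below. apply sum_below_ext. intros p _.
  rewrite sum_list_sum_below. apply sum_below_ext. intros q _.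
  rewrite sum_list_scal_l. simpl. ring.
Qed.

Lemma sos_gram_sums e gs x : Forall (fun g => delta_le g e) gs ->
  sum_u2 gs x = gram_u2 e (gram e gs) x /\ sum_v2 gs x = gram_v2 e (gram e gs) x
  /\ sum_uv gs x = gram_uv e (gram e gs) x.
Proof.
  intros Hdeg. rewrite Forall_forall in Hdeg. unfold delta_le in Hdeg.
  unfold sum_u2, sum_v2, sum_uv, gram_u2, gram_v2, gram_uv, gram.
  rewrite !(sum_list_ext gs (fun g => (peval _ x) ^ 2) (fun g => peval _ x * peval _ x))
    by (intros; ring).
  rewrite (sum_list_peval_mul gs fst fst (S e) (S e)),
          (sum_list_peval_mul gs snd snd (e - 1) (e - 1)),
          (sum_list_peval_mul gs fst snd (S e) (e - 1))
    by (intros g Hg; destruct (Hdeg g Hg); split; lia).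
  split; [|split]; apply bform_ext; intros p q Hp Hq; apply sum_list_ext; intros g _;
    rewrite ?coef_vec_snd, ?coef_vec_fst by (simpl; lia); reflexivity.
Qed.

Lemma sos_rep_iff_gram a b e gs : Forall (fun g => delta_le g e) gs ->
  sos_rep a b e gs <-> gram_identity e a b (gram e gs).
Proof.
  intros Hdeg. unfold sos_rep, gram_identity. rewrite sumsq_one_minus_x2_iff.
  split.
  - intros [_ H] x. destruct (sos_gram_sums e gs x Hdeg) as [<- [<- <-]]. apply H.
  - intros H. split; [exact Hdeg|]. intros x.
    destruct (sos_gram_sums e gs x Hdeg) as [-> [-> ->]]. apply H.
Qed.

Lemma gram_identity_ext e a b G G' :
  (forall p q, (p < gram_dim e)%nat -> (q < gram_dim e)%nat -> G p q = G' p q) ->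
  gram_identity e a b G -> gram_identity e a b G'.
Proof.
  unfold gram_dim. intros HG H x.
  unfold gram_u2, gram_v2, gram_uv in *.
  rewrite <- !(bform_ext _ _ _ _ _ _ G G') by (intros; apply HG; lia). apply H.
Qed.

Lemma gram_sym e gs d : sym_below d (gram e gs).
Proof. intros p q _ _. unfold gram. apply sum_list_ext. intros; ring. Qed.

Lemma gram_psd e gs d : psd d (gram e gs).
Proof.
  intros t.
  assert (E : qform d (gram e gs) t
              = sum_list gs (fun g => (sum_below d (fun p => coef_vec e g p * t p)) ^ 2)).
  { unfold qform, bform, gram.
    rewrite (sum_list_ext gs _ (fun g => sum_below d (fun p => sum_below d (fun q =>
               (coef_vec e g p * t p) * (coef_vec e g q * t q))))).
    2:{ intros g _. rewrite <- sum_below_mul. ring. }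
    rewrite sum_list_sum_below. apply sum_below_ext. intros p _.
    rewrite sum_list_sum_below. apply sum_below_ext. intros q _. simpl.
    rewrite (Rmult_comm _ (t p)), (Rmult_assoc (t p)), (Rmult_comm _ (t q)), <- Rmult_assoc,
      <- sum_list_scal_l.
    apply sum_list_ext. intros; ring. }
  rewrite E. apply sum_list_nonneg. intros; apply pow2_ge_0.
Qed.

Lemma gram_abs_le e gs B :
  (forall i, (i < S e)%nat -> coef_sq_sum fst i gs <= B /\ coef_sq_sum snd i gs <= B) ->
  forall p q, (p < gram_dim e)%nat -> (q < gram_dim e)%nat -> Rabs (gram e gs p q) <= B.
Proof.
  unfold gram_dim. intros HB.
  assert (Hc : forall p, (p < S e + (e - 1))%nat -> sum_list gs (fun g => (coef_vec e g p) ^ 2) <= B).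
  { intros p Hp. destruct (Nat.ltb_spec p (S e)).
    - rewrite (sum_list_ext gs _ (fun g => (nth p (fst g) 0) ^ 2))
        by (intros; rewrite coef_vec_fst; auto). apply HB. exact H.
    - replace p with (S e + (p - S e))%nat by lia.
      rewrite (sum_list_ext gs _ (fun g => (nth (p - S e) (snd g) 0) ^ 2))
        by (intros; rewrite coef_vec_snd; auto). apply HB. lia. }
  intros p q Hp Hq. specialize (Hc p Hp) as Hcp. specialize (Hc q Hq) as Hcq.
  assert (Hav : sum_list gs (fun g => ((coef_vec e g p) ^ 2 + (coef_vec e g q) ^ 2) / 2) <= B).
  { rewrite (sum_list_ext gs _ (fun g => / 2 * ((coef_vec e g p) ^ 2 + (coef_vec e g q) ^ 2)))
      by (intros; unfold Rdiv; ring).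
    rewrite sum_list_scal_l, sum_list_add. lra. }
  unfold gram. apply Rabs_le. split.
  - apply Rle_trans with
      (sum_list gs (fun g => -1 * (((coef_vec e g p) ^ 2 + (coef_vec e g q) ^ 2) / 2))).
    + rewrite sum_list_scal_l. lra.
    + apply sum_list_le. intros g _.
      pose proof (pow2_ge_0 (coef_vec e g p + coef_vec e g q)). unfold Rdiv. nra.
  - eapply Rle_trans; [|exact Hav]. apply sum_list_le. intros g _.
    pose proof (pow2_ge_0 (coef_vec e g p - coef_vec e g q)). unfold Rdiv. nra.
Qed.

Lemma N_le_of_gram_identity a b e G :
  sym_below (gram_dim e) G -> psd (gram_dim e) G -> gram_identity e a b G -> N_le a b e.
Proof.
  intros Hsym Hpsd Hid.
  destruct (psd_gram_decomposition (gram_dim e) G Hsym Hpsd) as [ws Hws].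
  set (gs := map (of_coef_vec e) ws).
  assert (Hdeg : Forall (fun g => delta_le g e) gs).
  { apply Forall_forall. intros g Hg. apply in_map_iff in Hg.
    destruct Hg as [w [<- _]]. apply delta_le_of_coef_vec. }
  exists gs. apply sos_rep_iff_gram; [exact Hdeg|].
  apply (gram_identity_ext e a b G); [|exact Hid].
  intros p q Hp Hq. unfold gram, gs. rewrite sum_list_map, Hws by auto.
  apply sum_list_ext. intros w _. rewrite !coef_vec_of_coef_vec by auto. reflexivity.
Qed.

Definition increasing (phi : nat -> nat) : Prop := forall k, (phi k < phi (S k))%nat.

Lemma increasing_ge phi : increasing phi -> forall k, (k <= phi k)%nat.
Proof. intros H k. induction k; [lia|]. specialize (H k). lia. Qed.

Lemma increasing_lt phi : increasing phi -> forall m n, (m < n)%nat -> (phi m < phi n)%nat.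
Proof. intros H m n Hmn. induction Hmn; [apply H|]. specialize (H m0). lia. Qed.

Lemma cv_subseq u l phi : Un_cv u l -> increasing phi -> Un_cv (fun k => u (phi k)) l.
Proof.
  intros Hu Hp eps He. destruct (Hu eps He) as [N HN]. exists N. intros k Hk.
  apply HN. pose proof (increasing_ge phi Hp k). lia.
Qed.

Lemma inv_succ_small eps : 0 < eps -> exists N, forall k, (N <= k)%nat -> / (INR k + 1) < eps.
Proof.
  intros He. destruct (archimed_cor1 eps He) as [N [HN HN0]]. exists N. intros k Hk.
  apply Rle_lt_trans with (/ INR N); auto.
  apply Rinv_le_contravar; [apply lt_0_INR; auto|]. apply le_INR in Hk. lra.
Qed.

Lemma bounded_cv_subseq (u : nat -> R) B : (forall k, Rabs (u k) <= B) ->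
  exists phi, increasing phi /\ exists l, Un_cv (fun k => u (phi k)) l.
Proof.
  intros HB.
  destruct (Bolzano_Weierstrass u (fun x => -B <= x <= B) (compact_P3 (-B) B)) as [l Hl].
  { intros k. specialize (HB k). pose proof (Rle_abs (u k)). pose proof (Rle_abs (- u k)).
    rewrite Rabs_Ropp in *. lra. }
  assert (Hnear : forall Nk : nat * nat,
            exists p, (fst Nk <= p)%nat /\ Rabs (u p - l) < / (INR (snd Nk) + 1)).
  { intros [N k].
    assert (Hpos : 0 < / (INR k + 1)) by (apply Rinv_0_lt_compat; pose proof (pos_INR k); lra).
    destruct (Hl (disc l (mkposreal _ Hpos)) N) as [p Hp]; [|exists p; exact Hp].
    exists (mkposreal _ Hpos). intros y Hy. exact Hy. }
  destruct (functional_choice _ Hnear) as [pick Hpick].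
  set (phi := fix phi k := match k with O => pick (O, O) | S k' => pick (S (phi k'), S k') end).
  exists phi. split.
  - intros k. simpl. destruct (Hpick (S (phi k), S k)) as [H1 _]. simpl in H1. lia.
  - exists l. intros eps He. destruct (inv_succ_small eps He) as [N HN]. exists N. intros k Hk.
    unfold Rdist. apply Rlt_trans with (/ (INR k + 1)); [|apply HN; auto].
    destruct k; simpl; [exact (proj2 (Hpick (O, O)))|exact (proj2 (Hpick (S (phi k), S k)))].
Qed.

Lemma bounded_family_cv_subseq {X : Type} (I : list X) (f : nat -> X -> R) B :
  (forall k i, In i I -> Rabs (f k i) <= B) ->
  exists phi, increasing phi /\
    exists L : X -> R, forall i, In i I -> Un_cv (fun k => f (phi k) i) (L i).
Proof.
  induction I as [|i0 I IH]; intros HB.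
  - exists (fun k => k). split; [intros k; lia|]. exists (fun _ => 0). intros i [].
  - destruct IH as [phi [Hphi [L' HL']]]; [intros k i Hi; apply HB; right; exact Hi|].
    destruct (bounded_cv_subseq (fun k => f (phi k) i0) B) as [psi [Hpsi [l Hl]]].
    { intros k. apply HB. left; reflexivity. }
    exists (fun k => phi (psi k)). split; [intros k; apply increasing_lt; auto|].
    exists (fun i => if excluded_middle_informative (i = i0) then l else L' i). intros i Hi.
    destruct (excluded_middle_informative (i = i0)) as [->|Hne]; [exact Hl|].
    destruct Hi as [<-|Hi]; [contradiction|].
    apply (cv_subseq (fun k => f (phi k) i)); auto.
Qed.

Lemma cv_of_closure (S : R -> R -> Prop) a b :
  (forall eps, eps > 0 -> exists a' b', S a' b' /\ Rabs (a' - a) < eps /\ Rabs (b' - b) < eps) ->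
  exists A B : nat -> R, Un_cv A a /\ Un_cv B b /\ forall k, S (A k) (B k).
Proof.
  intros Hcl.
  assert (Hk : forall k, exists ab : R * R,
             S (fst ab) (snd ab) /\ Rabs (fst ab - a) < / (INR k + 1)
             /\ Rabs (snd ab - b) < / (INR k + 1)).
  { intros k. destruct (Hcl (/ (INR k + 1))) as [a' [b' H]].
    - apply Rinv_0_lt_compat. pose proof (pos_INR k). lra.
    - exists (a', b'). exact H. }
  destruct (functional_choice _ Hk) as [AB HAB].
  exists (fun k => fst (AB k)), (fun k => snd (AB k)).
  split; [|split]; [| |intros k; apply HAB];
    intros eps He; destruct (inv_succ_small eps He) as [N HN]; exists N; intros k Hk';
    unfold Rdist; eapply Rlt_trans; [apply HAB| |apply HAB|]; apply HN; lia.
Qed.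

Section GramLimits.
Variables (Gs : nat -> nat -> nat -> R) (G : nat -> nat -> R) (d : nat).
Hypothesis HG : forall p q, (p < d)%nat -> (q < d)%nat -> Un_cv (fun k => Gs k p q) (G p q).

Lemma sym_below_limit : (forall k, sym_below d (Gs k)) -> sym_below d G.
Proof.
  intros Hs p q Hp Hq. apply (UL_sequence (fun k => Gs k p q)); [apply HG; auto|].
  apply (cv_ext (fun k => Gs k q p)); [intros; apply Hs; auto|apply HG; auto].
Qed.

Lemma psd_limit : (forall k, psd d (Gs k)) -> psd d G.
Proof.
  intros Hp t. apply (cv_nonneg (fun k => qform d (Gs k) t)); [|intros; apply Hp].
  apply bform_cv. intros; apply HG; simpl; lia.
Qed.

Lemma gram_identity_limit e (A B : nat -> R) a b : d = gram_dim e ->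
  Un_cv A a -> Un_cv B b -> (forall k, gram_identity e (A k) (B k) (Gs k)) -> gram_identity e a b G.
Proof.
  unfold gram_dim. intros -> HA HB Hid x.
  assert (Hcv : forall n1 n2 o1 o2, (o1 + n1 <= S e + (e - 1))%nat -> (o2 + n2 <= S e + (e - 1))%nat ->
            Un_cv (fun k => bform n1 n2 o1 o2 (Gs k) (pow x) (pow x))
                  (bform n1 n2 o1 o2 G (pow x) (pow x)))
    by (intros; apply bform_cv; intros; apply HG; lia).
  split.
  - apply (UL_sequence (fun k => gram_u2 e (Gs k) x)); [apply Hcv; lia|].
    apply (cv_ext (fun k => (1 - x ^ 2) * (1 - h (A k) (B k) x * gram_v2 e (Gs k) x)));
      [intros k; symmetry; apply Hid|].
    apply CV_mult; [apply cv_const|]. apply CV_minus; [apply cv_const|].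
    apply CV_mult; [apply h_cv; auto|apply Hcv; lia].
  - apply (UL_sequence (fun k => gram_uv e (Gs k) x)); [apply Hcv; lia|].
    apply (cv_ext (fun _ => 0)); [intros k; symmetry; apply Hid|apply cv_const].
Qed.

End GramLimits.

Lemma N_le_closed n : rel_closed_in inP (fun a b => inP a b /\ N_le a b n).
Proof.
  intros a b HP Hcl. split; [exact HP|].
  destruct (cv_of_closure (fun a' b' => N_le a' b' n) a b) as [A [B [HA [HB HN]]]].
  { intros eps Heps. destruct (Hcl eps Heps) as [a' [b' [_ [[_ HN] Hd]]]]. eauto. }
  destruct (functional_choice (fun k gs => sos_rep (A k) (B k) n gs) HN) as [GS HGS].
  assert (Hh1 : 0 < h a b 1) by (apply (proj2 HP); rewrite Rabs_R1; lra).
  destruct (coef_sq_sum_bounded_near a b 1 n ltac:(ring) Hh1) as [Bc [eta [Heta HBc]]].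
  destruct (HA eta Heta) as [K1 HK1]. destruct (HB eta Heta) as [K2 HK2].
  set (K0 := max K1 K2).
  set (I := list_prod (seq 0 (gram_dim n)) (seq 0 (gram_dim n))).
  assert (HI : forall p q, In (p, q) I <-> (p < gram_dim n)%nat /\ (q < gram_dim n)%nat)
    by (intros p q; unfold I; rewrite in_prod_iff, !in_seq; lia).
  destruct (bounded_family_cv_subseq I (fun k i => gram n (GS (K0 + k)%nat) (fst i) (snd i)) Bc)
    as [phi [Hphi [L HL]]].
  { intros k [p q] Hi. apply HI in Hi. apply gram_abs_le; try tauto.
    apply (HBc (A (K0 + k)%nat) (B (K0 + k)%nat)); [apply HK1; lia|apply HK2; lia|apply HGS]. }
  set (psi := fun k => (K0 + phi k)%nat).
  assert (Hpsi : increasing psi) by (intros k; unfold psi; specialize (Hphi k); lia).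
  assert (HG : forall p q, (p < gram_dim n)%nat -> (q < gram_dim n)%nat ->
                 Un_cv (fun k => gram n (GS (psi k)) p q) (L (p, q)))
    by (intros p q Hp Hq; apply (HL (p, q)), HI; auto).
  apply (N_le_of_gram_identity a b n (fun p q => L (p, q))).
  - apply (sym_below_limit _ _ _ HG). intros; apply gram_sym.
  - apply (psd_limit _ _ _ HG). intros; apply gram_psd.
  - apply (gram_identity_limit _ _ _ HG n (fun k => A (psi k)) (fun k => B (psi k)));
      [reflexivity|apply cv_subseq; auto|apply cv_subseq; auto|].
    intros k. apply sos_rep_iff_gram; [exact (proj1 (HGS (psi k)))|apply HGS].
Qed.

Theorem corollary4p6 :
  (forall n : nat,
     rel_closed_in inP (fun a b => inP a b /\ N_le a b n)) /\
  (forall (sa sb : nat -> R) (a0 b0 : R),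
     (forall k : nat, inP (sa k) (sb k)) ->
     Un_cv sa a0 -> Un_cv sb b0 ->
     inP' a0 b0 -> ~ (a0 = 0 /\ b0 = -1) ->
     forall M : nat, exists K : nat, forall k : nat,
       (K <= k)%nat -> ~ N_le (sa k) (sb k) M).
Proof.
  split; [exact N_le_closed|].
  intros sa sb a0 b0 _ Ha Hb HP' Hn.
  destruct (inP'_outer_root a0 b0 HP' Hn) as [r [s [Hr [Hhr [Hs Hhs]]]]].
  exact (N_unbounded_near_outer_root sa sb a0 b0 r s Ha Hb Hr Hhr Hs Hhs).
Qed.
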